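(* Let $S\subseteq\mathcal S_d$ be nonempty, $[d]$ partitioned into groups $G_1,\dots,G_g$, $\bar\alpha,\bar\beta\in[0,1]^g$, $k\in[d]$, and assume an $(\bar\alpha,\bar\beta)$-$k$-fair ranking in $\mathcal S_d$ exists. Set $\alpha'_i=|G_i|-\lceil\beta_i k\rceil$ and $\beta'_i=|G_i|-\lfloor\alpha_i k\rfloor$. Let $\tau$ be an $(\bar\alpha',\bar\beta')$-constrained bottom-$(d-k)$ ranking minimizing $2\sum_{\pi\in S}\sum_{i\in D_\tau}(\tau(i)-\pi(i))\mathbb{1}[\pi(i)<\tau(i)]$, and let $\sigma\in\mathcal S_d$ be a ranking with $\sigma(a)=\tau(a)$ for all $a\in D_\tau$ minimizing $2\sum_{\pi\in S}\sum_{i\in[d]}(\sigma(i)-\pi(i))\mathbb{1}[\pi(i)<\sigma(i)]$ among such extensions. Let $\sigma^*$ be any $(\bar\alpha,\bar\beta)$-$k$-fair ranking minimizing $\mathrm{Obj}$, $\mathrm{OPT}=\mathrm{Obj}(\sigma^* )$, and $R^*=\{a\in[d]:\sigma^*(a)>k\}$. Then $\sigma$ is $(\bar\alpha,\bar\beta)$-$k$-fair and $\mathrm{Obj}(\sigma)\le\overrightarrow{\mathrm{Obj}}(\sigma^*_{R^*})+\mathrm{OPT}$.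
   Context: $\mathcal{S}_d$ is the set of rankings of $[d]$, $\pi(a)$ the rank of $a$. A ranking is $(\bar\alpha,\bar\beta)$-$k$-fair if for every $i\in[g]$ its top $k$ positions contain at least $\lfloor\alpha_i k\rfloor$ and at most $\lceil\beta_i k\rceil$ members of $G_i$. A bottom-$m$ ranking is a bijection $\tau:D_\tau\to\{d-m+1,\dots,d\}$, $D_\tau\subseteq[d]$; it is $(\bar\alpha',\bar\beta')$-constrained if $\alpha'_i\le|D_\tau\cap G_i|\le\beta'_i$ for all $i$. $F(\pi,\sigma)=\sum_i|\pi(i)-\sigma(i)|$, $\mathrm{Obj}(\sigma)=\sum_{\pi\in S}F(\pi,\sigma)$, and for $D\subseteq[d]$, $\overrightarrow{\mathrm{Obj}}(\sigma_D):=2\sum_{\pi\in S}\sum_{i\in D}(\sigma(i)-\pi(i))\mathbb{1}[\pi(i)<\sigma(i)]$. *)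

From HB Require Import structures.
From mathcomp Require Import all_boot all_order all_algebra all_fingroup.
From mathcomp Require Import reals.
Set Implicit Arguments. Unset Strict Implicit. Unset Printing Implicit Defensive.
Import Order.TTheory GRing.Theory Num.Theory.

(* [d] is represented by 'I_d (element a : 'I_d stands for a+1).
   A ranking in S_d is a permutation s : {perm 'I_d}; its rank function
   (1-based, values in 1..d) is [rank s]. *)
Definition rank (d : nat) (s : {perm 'I_d}) (a : 'I_d) : nat := (val (s a)).+1.

(* The partition of [d] into groups G_1..G_g is given by the map
   grp : 'I_d -> 'I_g sending each element to the index of its group. *)
Definition grpset (d g : nat) (grp : 'I_d -> 'I_g) (i : 'I_g) : {set 'I_d} :=
  [set a | grp a == i].

Definition topk_count (d g : nat) (grp : 'I_d -> 'I_g) (k : nat)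
  (s : {perm 'I_d}) (i : 'I_g) : nat :=
  #|[set a in grpset grp i | rank s a <= k]|.

Definition kfair (R : realType) (d g : nat) (grp : 'I_d -> 'I_g)
  (alpha beta : 'I_g -> R) (k : nat) (s : {perm 'I_d}) : Prop :=
  forall i : 'I_g,
    (Num.floor (alpha i * k%:R) <= (topk_count grp k s i)%:Z)%R /\
    ((topk_count grp k s i)%:Z <= Num.ceil (beta i * k%:R))%R.

(* A bottom-m ranking: a set D (its domain D_tau) and a map t : 'I_d -> nat
   whose restriction to D is a bijection D -> {d-m+1, ..., d}
   (values of t outside D are irrelevant). *)
Definition bottom_ranking (d m : nat) (D : {set 'I_d}) (t : 'I_d -> nat) : Prop :=
  [/\ (forall a, a \in D -> d - m + 1 <= t a <= d),
      {in D &, injective t} &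
      (forall r, d - m + 1 <= r <= d -> exists2 a, a \in D & t a = r)].

Definition constrained (d g : nat) (grp : 'I_d -> 'I_g)
  (alpha' beta' : 'I_g -> int) (D : {set 'I_d}) : Prop :=
  forall i : 'I_g,
    (alpha' i <= #|D :&: grpset grp i|%:Z)%R /\ (#|D :&: grpset grp i|%:Z <= beta' i)%R.

Definition footrule (d : nat) (p s : {perm 'I_d}) : nat :=
  \sum_(a : 'I_d) `|rank p a - rank s a|%N.

Definition Obj (d : nat) (S : {set {perm 'I_d}}) (s : {perm 'I_d}) : nat :=
  \sum_(p in S) footrule p s.

Definition Objdir (d : nat) (S : {set {perm 'I_d}}) (D : {set 'I_d})
  (f : 'I_d -> nat) : nat :=
  2 * \sum_(p in S) \sum_(a in D) (f a - rank p a) * (rank p a < f a).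

(* The top k positions of any extension [sigma] of [tau] are exactly the complement of
   [D_tau], and fairness of a ranking only depends on which elements sit in its top k,
   so [sigma] is fair because [D_tau] is constrained.  For the cost, rerank the elements
   outside [D_tau] in the relative order of [sigma*] below the positions of [tau]: this
   gives an extension [s] of [tau] ranking every element outside [D_tau] no lower than
   [sigma*] does.  As the footrule distance is twice its directed part,
   Obj sigma <= Objdir s = Objdir tau on [D_tau] + Objdir s off [D_tau].  The first term
   is at most Objdir [sigma*] on [R*], because [R*] with the ranks of [sigma*] is a
   competitor of [tau]; the second is at most Objdir [sigma*] = OPT. *)
From HB Require Import structures.
From mathcomp Require Import all_boot all_order all_algebra all_fingroup.
From mathcomp Require Import reals.
From mathcomp Require Import zify.

Set Implicit Arguments.
Unset Strict Implicit.
Unset Printing Implicit Defensive.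
Import Order.TTheory GRing.Theory Num.Theory.

Lemma rank_le (d : nat) (s : {perm 'I_d}) (a : 'I_d) : rank s a <= d.
Proof. exact: ltn_ord. Qed.

Lemma rank_inj (d : nat) (s : {perm 'I_d}) : injective (rank s).
Proof. by move=> a b [] /val_inj /perm_inj. Qed.

Lemma sum_rank (d : nat) (s : {perm 'I_d}) :
  \sum_(a : 'I_d) rank s a = \sum_(a : 'I_d) (val a).+1.
Proof. by rewrite /rank [RHS](reindex_inj (@perm_inj _ s)). Qed.

Lemma sum_distn_eq (I : finType) (f h : I -> nat) :
  \sum_i f i = \sum_i h i -> \sum_i `|f i - h i|%N = 2 * \sum_i (h i - f i).
Proof.
move=> eq_sum.
have sum_subC : \sum_i (f i - h i) = \sum_i (h i - f i).
  apply: (@addnI (\sum_i h i)); rewrite -{2}eq_sum -!big_split /=.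
  by apply: eq_bigr => i _; lia.
rewrite mul2n -addnn -[in X in _ + X]sum_subC -big_split /=.
by apply: eq_bigr => i _; lia.
Qed.

Lemma ObjE (d : nat) (S : {set {perm 'I_d}}) (s : {perm 'I_d}) :
  Obj S s = Objdir S setT (rank s).
Proof.
rewrite /Obj /Objdir big_distrr /=; apply: eq_bigr => p _.
rewrite /footrule sum_distn_eq ?sum_rank //; congr (2 * _).
by apply: eq_big => [a | a _]; rewrite ?in_setT //; lia.
Qed.

Section DirectedObjective.

Variables (d : nat) (S : {set {perm 'I_d}}).

Lemma Objdir_split (D : {set 'I_d}) (f : 'I_d -> nat) :
  Objdir S setT f = Objdir S D f + Objdir S (~: D) f.
Proof.
rewrite /Objdir -mulnDr -big_split /=; congr (2 * _); apply: eq_bigr => p _.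
by rewrite (big_setID D) setTI setTD.
Qed.

Lemma eq_Objdir (D : {set 'I_d}) (f f' : 'I_d -> nat) :
  {in D, f =1 f'} -> Objdir S D f = Objdir S D f'.
Proof.
move=> eq_ff'; congr (2 * _); apply: eq_bigr => p _.
by apply: eq_bigr => a aD; rewrite eq_ff'.
Qed.

Lemma leq_Objdir (D : {set 'I_d}) (f f' : 'I_d -> nat) :
  {in D, forall a, f a <= f' a} -> Objdir S D f <= Objdir S D f'.
Proof.
move=> le_ff'; rewrite leq_mul2l; apply/orP; right.
apply: leq_sum => p _; apply: leq_sum => a aD.
by have := le_ff' a aD; lia.
Qed.

Lemma subset_Objdir (A B : {set 'I_d}) (f : 'I_d -> nat) :
  A \subset B -> Objdir S A f <= Objdir S B f.
Proof.
move=> sAB; rewrite leq_mul2l; apply/orP; right.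
apply: leq_sum => p _; rewrite [leqRHS](big_setID A) (setIidPr sAB) /=.
exact: leq_addr.
Qed.

End DirectedObjective.

Lemma card_ord_lt (d m : nat) : #|[set i : 'I_d | i < m]| <= m.
Proof.
rewrite cardE -(size_map val) -[leqRHS](size_iota 0).
apply: uniq_leq_size; first by rewrite map_inj_uniq ?enum_uniq //; apply: val_inj.
by move=> x /mapP [i]; rewrite mem_enum inE => lt_im ->; rewrite mem_iota.
Qed.

Section RankAmong.

Variables (d : nat) (X : {set 'I_d}) (p : {perm 'I_d}).

Definition rank_among (a : 'I_d) : nat := #|[set b in X | p b < p a]|.

Lemma rank_among_lt (a : 'I_d) : a \in X -> rank_among a < #|X|.
Proof.
move=> aX; apply: proper_card; apply/properP; split.
  by apply/subsetP => b; rewrite inE => /andP[].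
by exists a; rewrite // inE ltnn andbF.
Qed.

Lemma rank_among_le (a : 'I_d) : rank_among a <= p a.
Proof.
apply: leq_trans (card_ord_lt d (p a)).
rewrite /rank_among -(card_imset _ (@perm_inj _ p)); apply: subset_leq_card.
by apply/subsetP => x /imsetP [b]; rewrite !inE => /andP[_ lt_ba] ->.
Qed.

Lemma rank_among_mono (a b : 'I_d) :
  a \in X -> p a < p b -> rank_among a < rank_among b.
Proof.
move=> aX lt_ab; apply: proper_card; apply/properP; split.
  apply/subsetP => c; rewrite !inE => /andP[-> lt_ca]; exact: ltn_trans lt_ab.
by exists a; rewrite !inE ?aX ?lt_ab // ltnn andbF.
Qed.

End RankAmong.

Lemma exists_rank_extension_below (d m : nat) (sigma p : {perm 'I_d})
    (D : {set 'I_d}) :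
  (forall a, (rank sigma a <= m) = (a \notin D)) ->
  exists2 s : {perm 'I_d},
    {in D, rank s =1 rank sigma} & {in ~: D, forall a, rank s a <= rank p a}.
Proof.
move=> top_sigma.
have card_notD : #|~: D| <= m.
  apply: leq_trans (card_ord_lt d m).
  rewrite -(card_imset _ (@perm_inj _ sigma)); apply: subset_leq_card.
  by apply/subsetP => x /imsetP [a]; rewrite !inE -top_sigma => le_am ->.
have low_notD a : a \notin D -> rank_among (~: D) p a < m.
  by move=> aD; apply: leq_trans card_notD; apply: rank_among_lt; rewrite inE.
have high_D a : a \in D -> m <= val (sigma a).
  by move=> aD; rewrite leqNgt -[_ < m]/(rank sigma a <= m) top_sigma aD.
pose pos a := if a \in D then val (sigma a) else rank_among (~: D) p a.
have pos_lt a : pos a < d.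
  rewrite /pos; case: ifP => aD; first exact: ltn_ord.
  apply: (@leq_trans #|~: D|); first by apply: rank_among_lt; rewrite inE aD.
  by rewrite -[leqRHS]card_ord; apply: max_card.
pose f a : 'I_d := insubd a (pos a).
have fE a : val (f a) = pos a by rewrite val_insubd pos_lt.
have f_inj : injective f.
  move=> a b /(congr1 val); rewrite !fE /pos.
  case aD: (a \in D); case bD: (b \in D).
  - by move=> /val_inj /perm_inj.
  - by have := high_D a aD; have := low_notD b (negbT bD); lia.
  - by have := high_D b bD; have := low_notD a (negbT aD); lia.
  have [aD' bD'] : a \in ~: D /\ b \in ~: D by rewrite !inE aD bD.
  case: (ltngtP (p a) (p b)) => [lt_ab | lt_ba | /val_inj /perm_inj //].
    by have := rank_among_mono aD' lt_ab; lia.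
  by have := rank_among_mono bD' lt_ba; lia.
exists (perm f_inj) => a; rewrite /rank permE fE /pos ?inE; first by move->.
by move=> /negbTE ->; rewrite ltnS rank_among_le.
Qed.

Lemma bottom_ranking_ext_top (d k : nat) (D : {set 'I_d}) (t : 'I_d -> nat)
    (sigma : {perm 'I_d}) :
  k <= d -> bottom_ranking (d - k) D t -> {in D, forall a, rank sigma a = t a} ->
  forall a, (rank sigma a <= k) = (a \notin D).
Proof.
move=> le_kd [t_range _ t_onto] ext a.
case aD: (a \in D) => /=.
  by have := t_range a aD; rewrite -ext //; lia.
rewrite leqNgt; apply/negP => lt_ka.
have [|b bD] := t_onto (rank sigma a); first by have := rank_le sigma a; lia.
by rewrite -ext // => /rank_inj eq_ba; move: bD; rewrite eq_ba aD.
Qed.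

Lemma bottom_ranking_rank_gt (d k : nat) (s : {perm 'I_d}) :
  k <= d -> bottom_ranking (d - k) [set a | k < rank s a] (rank s).
Proof.
move=> le_kd; split=> [a | a b _ _ /rank_inj // | r].
  by rewrite inE; have := rank_le s a; lia.
move=> r_range; have lt_r : r.-1 < d by lia.
exists ((s^-1)%g (Ordinal lt_r)); rewrite ?inE /rank permKV /=; lia.
Qed.

Lemma topk_count_compl (d g : nat) (grp : 'I_d -> 'I_g) (k : nat)
    (s : {perm 'I_d}) (D : {set 'I_d}) (i : 'I_g) :
  (forall a, (rank s a <= k) = (a \notin D)) ->
  topk_count grp k s i = #|grpset grp i| - #|D :&: grpset grp i|.
Proof.
move=> top_s; rewrite /topk_count setIC -cardsD; apply: eq_card => a.
by rewrite !inE top_s andbC.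
Qed.

Definition bottom_lower (R : realType) (d g : nat) (grp : 'I_d -> 'I_g)
    (beta : 'I_g -> R) (k : nat) (i : 'I_g) : int :=
  (#|grpset grp i|%:Z - Num.ceil (beta i * k%:R))%R.

Definition bottom_upper (R : realType) (d g : nat) (grp : 'I_d -> 'I_g)
    (alpha : 'I_g -> R) (k : nat) (i : 'I_g) : int :=
  (#|grpset grp i|%:Z - Num.floor (alpha i * k%:R))%R.

Lemma kfair_constrainedE (R : realType) (d g : nat) (grp : 'I_d -> 'I_g)
    (alpha beta : 'I_g -> R) (k : nat) (s : {perm 'I_d}) (D : {set 'I_d}) :
  (forall a, (rank s a <= k) = (a \notin D)) ->
  kfair grp alpha beta k s <->
  constrained grp (bottom_lower grp beta k) (bottom_upper grp alpha k) D.
Proof.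
move=> top_s; split=> bounds i; have := bounds i;
  rewrite /bottom_lower /bottom_upper (topk_count_compl _ _ top_s);
  have : #|D :&: grpset grp i| <= #|grpset grp i| by apply/subset_leq_card/subsetIr.
all: lia.
Qed.

Theorem lemmaB2 (R : realType) (d g : nat) (grp : 'I_d -> 'I_g)
  (S : {set {perm 'I_d}}) (alpha beta : 'I_g -> R) (k : nat)
  (Dtau : {set 'I_d}) (tau : 'I_d -> nat)
  (sigma sigmastar : {perm 'I_d}) :
  S != set0 ->
  (forall i, (0 <= alpha i <= 1)%R /\ (0 <= beta i <= 1)%R) ->
  1 <= k <= d ->
  (exists s : {perm 'I_d}, kfair grp alpha beta k s) ->
  let alpha' := fun i => (#|grpset grp i|%:Z - Num.ceil (beta i * k%:R))%R in
  let beta' := fun i => (#|grpset grp i|%:Z - Num.floor (alpha i * k%:R))%R in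
  (* tau: constrained bottom-(d-k) ranking minimizing the directed objective *)
  bottom_ranking (d - k) Dtau tau ->
  constrained grp alpha' beta' Dtau ->
  (forall (D : {set 'I_d}) (t : 'I_d -> nat),
      bottom_ranking (d - k) D t -> constrained grp alpha' beta' D ->
      Objdir S Dtau tau <= Objdir S D t) ->
  (* sigma: extension of tau minimizing the directed objective over [d] *)
  (forall a, a \in Dtau -> rank sigma a = tau a) ->
  (forall s : {perm 'I_d}, (forall a, a \in Dtau -> rank s a = tau a) ->
      Objdir S setT (rank sigma) <= Objdir S setT (rank s)) ->
  (* sigmastar: optimal fair ranking *)
  kfair grp alpha beta k sigmastar ->
  (forall s : {perm 'I_d}, kfair grp alpha beta k s -> Obj S sigmastar <= Obj S s) ->
  let OPT := Obj S sigmastar in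
  let Rstar := [set a | k < rank sigmastar a] in
  kfair grp alpha beta k sigma /\
  Obj S sigma <= Objdir S Rstar (rank sigmastar) + OPT.
Proof.
move=> _ _ /andP[_ le_kd] _ alpha' beta' tau_bottom tau_constr tau_min sigma_ext
  sigma_min sigmastar_fair _ OPT Rstar.
have top_sigma := bottom_ranking_ext_top le_kd tau_bottom sigma_ext.
split; first exact/(kfair_constrainedE _ _ _ top_sigma).
have top_sigmastar a : (rank sigmastar a <= k) = (a \notin Rstar).
  by rewrite inE -leqNgt.
have tau_le_Rstar : Objdir S Dtau tau <= Objdir S Rstar (rank sigmastar).
  apply: tau_min; first exact: bottom_ranking_rank_gt.
  exact/(kfair_constrainedE _ _ _ top_sigmastar).
have [s s_ext s_le] := exists_rank_extension_below sigmastar top_sigma.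
have s_ext_tau a : a \in Dtau -> rank s a = tau a.
  by move=> aD; rewrite s_ext ?sigma_ext.
rewrite ObjE (leq_trans (sigma_min s s_ext_tau)) // (Objdir_split _ Dtau).
rewrite (eq_Objdir _ s_ext_tau) leq_add // /OPT ObjE.
exact: leq_trans (leq_Objdir S s_le) (subset_Objdir S _ (subsetT _)).
Qed.
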